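(* For every $n$-point metric $M=(V,\delta)$ and every range assignment $r:V\to\mathbb{R}^+$, $w(MSF(SDG(M,r))) \le 2\log_{5/4} n\cdot w(MST(M))$; in particular $w(MSF(SDG(M,r))) = O(\log n)\cdot w(MST(M))$. Consequently, every connected symmetric disk graph of $M$ has a minimum spanning tree of weight $O(\log n)\cdot w(MST(M))$.
   Context: A metric $M=(V,\delta)$ is viewed as the complete weighted graph on $V$ with edge weights $\delta(u,v)$; $MST(M)$ is its minimum spanning tree. A range assignment is a map $r:V\to\mathbb{R}^+$. The symmetric disk graph $SDG(M,r)$ is the undirected spanning subgraph containing the edge $(u,v)$ (with weight $\delta(u,v)$) if and only if $r(u)\ge\delta(u,v)$ and $r(v)\ge\delta(u,v)$. $MSF(\cdot)$ denotes a minimum spanning forest (a spanning forest with the same connected components and minimum total weight). The weight $w(\cdot)$ of a graph is the sum of its edge weights. *)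

From Stdlib Require Import Reals Relations.
From mathcomp Require Import all_boot.

Set Implicit Arguments.
Unset Strict Implicit.

Open Scope R_scope.

Section Defs.
Variable V : finType.

Definition is_metric (d : V -> V -> R) : Prop :=
  (forall u v, d u v = 0 <-> u = v) /\
  (forall u v, d u v = d v u) /\
  (forall u v w, d u w <= d u v + d v w).

Definition SDG (d : V -> V -> R) (r : V -> R) : V -> V -> Prop :=
  fun u v => u <> v /\ d u v <= r u /\ d u v <= r v.

Definition complete_graph : V -> V -> Prop := fun u v => u <> v.

(* Edge sets of undirected subgraphs are stored as sets of ordered pairs,
   containing both orientations of every edge. *)
Definition undirected (F : {set V * V}) : Prop :=
  forall u v, (u, v) \in F -> (v, u) \in F /\ u <> v.

Definition erel (F : {set V * V}) : V -> V -> Prop := fun u v => (u, v) \in F.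

Definition conn (F : {set V * V}) : V -> V -> Prop := clos_refl_trans V (erel F).

(* acyclic: no edge lies on a cycle, i.e. removing any edge disconnects its ends *)
Definition is_forest (F : {set V * V}) : Prop :=
  undirected F /\
  forall u v, (u, v) \in F -> ~ conn ((F :\ (u, v)) :\ (v, u)) u v.

(* weight of an undirected edge set: each edge counted once *)
Definition weight (d : V -> V -> R) (F : {set V * V}) : R :=
  (\big[Rplus/0]_(e in F) d e.1 e.2) / 2.

Definition spanning_forest_of (G : V -> V -> Prop) (F : {set V * V}) : Prop :=
  is_forest F /\
  (forall u v, (u, v) \in F -> G u v) /\
  (forall u v, conn F u v <-> clos_refl_trans V G u v).

Definition is_MSF (d : V -> V -> R) (G : V -> V -> Prop) (F : {set V * V}) : Prop :=
  spanning_forest_of G F /\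
  forall F', spanning_forest_of G F' -> weight d F <= weight d F'.

Definition is_MST (d : V -> V -> R) (T : {set V * V}) : Prop :=
  is_MSF d complete_graph T.

End Defs.

(* Fix l > 0 and let S be the set of edges of F of length at least l.  Every
   endpoint of S has radius at least l, so two endpoints at distance less than l
   are joined by a disk-graph edge shorter than every edge of S; by the cut
   property of F, each edge of S remains a bridge after adding all these short
   "hops".  Orient every edge of S away from a fixed root of its component in
   the augmented graph: an edge is determined by its child end up to
   orientation, and distinct children are at distance at least l.  A packing
   argument along T, with the 1-Lipschitz functions min (d(., p), l/2), shows
   that such an l-separated set Q satisfies |Q| l <= 2 w(T).  Hence F has at most
   2 w(T) / l edges of length at least l, and summing over its edges in
   decreasing order of length, w(F) <= 2 w(T) H_(n^2) <= 2 w(T) (1 + 2 ln n),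
   which is at most 2 log_(5/4) n w(T) as soon as n >= 2. *)

From HB Require Import structures.
From Stdlib Require Import Reals Relations Lra.
From mathcomp Require Import all_boot boolp.

Set Implicit Arguments.
Unset Strict Implicit.

Open Scope R_scope.

HB.instance Definition _ := Monoid.isComLaw.Build R 0 Rplus
  (fun a b c => esym (Rplus_assoc a b c)) Rplus_comm Rplus_0_l.

Local Notation "\sum_ ( i 'in' A ) F" := (\big[Rplus/0]_(i in A) F) : R_scope.

Arguments rt_trans {A R x y z}.
Arguments rt_step {A R x y}.
Arguments rt_refl {A R x}.

Section ReflTransClosure.
Variable A : Type.
Implicit Type R : A -> A -> Prop.

Lemma clos_rt_mono R (R' : A -> A -> Prop) :
  (forall x y, R x y -> clos_refl_trans A R' x y) ->
  forall a b, clos_refl_trans A R a b -> clos_refl_trans A R' a b.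
Proof.
move=> H a b; elim=> [x y /H //|x|x y z _ H1 _ H2]; first exact: rt_refl.
exact: rt_trans H1 H2.
Qed.

Lemma clos_rt_sym R :
  (forall x y, R x y -> R y x) ->
  forall a b, clos_refl_trans A R a b -> clos_refl_trans A R b a.
Proof.
move=> H a b; elim=> [x y /H ?|x|x y z _ H1 _ H2]; first exact: rt_step.
  exact: rt_refl.
exact: rt_trans H2 H1.
Qed.

Lemma clos_rt_add_edge R (R' : A -> A -> Prop) x y :
  (forall a b, R a b -> R' a b \/ (a = x /\ b = y) \/ (a = y /\ b = x)) ->
  forall p q, clos_refl_trans A R p q ->
  clos_refl_trans A R' p q \/
  ((clos_refl_trans A R' p x \/ clos_refl_trans A R' p y) /\
   (clos_refl_trans A R' x q \/ clos_refl_trans A R' y q)).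
Proof.
move=> H p q /clos_rt_rt1n_iff; elim=> [z|a b c Rab _ IH].
  by left; exact: rt_refl.
case: (H _ _ Rab) => [R'ab|[[? ?]|[? ?]]]; subst.
- case: IH => [Hbc|[[Hb|Hb] Hq]].
  + by left; apply: rt_trans (rt_step R'ab) Hbc.
  + by right; split => //; left; apply: rt_trans (rt_step R'ab) Hb.
  + by right; split => //; right; apply: rt_trans (rt_step R'ab) Hb.
- right; split; first by left; exact: rt_refl.
  by case: IH => [Hc|[_ Hq]] //; right.
- right; split; first by right; exact: rt_refl.
  by case: IH => [Hc|[_ Hq]] //; left.
Qed.

Lemma clos_rt_exit_edge R (P : A -> Prop) x y :
  clos_refl_trans A R x y -> P x -> ~ P y -> exists a b, [/\ R a b, P a & ~ P b].
Proof.
move=> /clos_rt_rt1n_iff; elim=> [z|a b c Rab _ IH] Pa nPc; first by [].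
by case: (pselect (P b)) => [/IH|nPb]; [apply|exists a, b].
Qed.

End ReflTransClosure.

Section RealSums.
Variable X : finType.
Implicit Types (A B : {set X}) (f g : X -> R).

Lemma sumR_le A f g :
  (forall i, i \in A -> f i <= g i) -> \sum_(i in A) f i <= \sum_(i in A) g i.
Proof.
move=> H; apply: (big_ind2 (fun a b => a <= b)) => //; first exact: Rle_refl.
by move=> *; apply: Rplus_le_compat.
Qed.

Lemma sumR_ge0 A f : (forall i, i \in A -> 0 <= f i) -> 0 <= \sum_(i in A) f i.
Proof.
move=> H; apply: (big_ind (fun a => 0 <= a)) => //; first exact: Rle_refl.
by move=> *; lra.
Qed.

Lemma sumR_subset A B f :
  A \subset B -> (forall i, i \in B -> 0 <= f i) ->
  \sum_(i in A) f i <= \sum_(i in B) f i.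
Proof.
move=> sAB H; rewrite [X in _ <= X](big_setID A) /= (setIidPr sAB).
suff : 0 <= \sum_(i in B :\: A) f i by lra.
by apply: sumR_ge0 => i; rewrite inE => /andP[_ /H].
Qed.

Lemma sumR_const A c : \sum_(i in A) c = INR #|A| * c.
Proof.
rewrite big_const; elim: #|A| => [|n IH]; first by rewrite /=; lra.
by rewrite iterS IH S_INR; lra.
Qed.

End RealSums.

Section EdgeSets.
Variable V : finType.
Implicit Types (E : {set V * V}) (G : V -> V -> Prop).

Definition delete_edge E u v : {set V * V} := (E :\ (u, v)) :\ (v, u).

Lemma in_delete_edge E u v a b :
  ((a, b) \in delete_edge E u v) =
  [&& (a, b) != (v, u), (a, b) != (u, v) & (a, b) \in E].
Proof. by rewrite !inE. Qed.

Lemma delete_edge_subset E u v : delete_edge E u v \subset E.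
Proof. by apply/subsetP => e; rewrite !inE => /and3P[]. Qed.

Lemma delete_edgeC E u v : delete_edge E u v = delete_edge E v u.
Proof. by apply/setP => e; rewrite !inE andbA [X in X && _]andbC -andbA. Qed.

Lemma card_delete_edge E u v :
  (u, v) \in E -> (#|delete_edge E u v| < #|E|)%N.
Proof.
move=> uvE; apply: leq_ltn_trans (subset_leq_card (subsetDl _ _)) _.
by rewrite (cardsD1 (u, v) E) uvE.
Qed.

Lemma undirected_delete_edge E u v :
  undirected E -> undirected (delete_edge E u v).
Proof.
move=> uE a b; rewrite !in_delete_edge => /and3P[h1 h2 /uE[baE nab]].
split => //; apply/and3P; split => //.
  by apply: contra h2 => /eqP[-> ->].
by apply: contra h1 => /eqP[-> ->].
Qed.

Lemma undirected_add_edge E a b :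
  undirected E -> a <> b -> undirected (E :|: [set (a, b); (b, a)]).
Proof.
move=> uE nab p q; rewrite !inE => /orP[/uE[-> npq] //|].
by case/orP=> /eqP[-> ->]; rewrite eqxx ?orbT; split => // /esym.
Qed.

Lemma erel_delete_edge E u v a b :
  erel E a b ->
  erel (delete_edge E u v) a b \/ (a = u /\ b = v) \/ (a = v /\ b = u).
Proof.
move=> abE; case: (boolP ((a, b) \in delete_edge E u v)) => [|]; first by left.
rewrite in_delete_edge abE andbT => /nandP[] /negPn /eqP[-> ->]; tauto.
Qed.

Lemma delete_edge_setU2 E a b :
  (a, b) \notin E -> (b, a) \notin E ->
  delete_edge (E :|: [set (a, b); (b, a)]) a b = E.
Proof.
move=> abE baE; apply/setP => e; rewrite /delete_edge !inE.
case: (eqVneq e (b, a)) => [->|_]; first by rewrite (negbTE baE).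
by case: (eqVneq e (a, b)) => [->|_]; rewrite ?(negbTE abE) ?orbF.
Qed.

Lemma conn_sym E : undirected E -> forall a b, conn E a b -> conn E b a.
Proof. by move=> uE; apply: clos_rt_sym => a b /uE[]. Qed.

Lemma conn_delete_edge E u v :
  undirected E -> conn (delete_edge E u v) u v ->
  forall a b, conn E a b <-> conn (delete_edge E u v) a b.
Proof.
move=> uE cuv a b; split => cab; last first.
  apply: clos_rt_mono cab => p q /(subsetP (delete_edge_subset _ _ _)) pq.
  exact: rt_step.
apply: clos_rt_mono cab => p q /(erel_delete_edge u v) [/rt_step //|[[-> ->]|[-> ->]]] //.
exact/conn_sym/cuv/undirected_delete_edge.
Qed.

Lemma sum_delete_edge E u v (f : V * V -> R) :
  undirected E -> (u, v) \in E ->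
  \sum_(e in E) f e = f (u, v) + f (v, u) + \sum_(e in delete_edge E u v) f e.
Proof.
move=> uE uvE; have [vuE nuv] := uE _ _ uvE.
rewrite (bigD1 (u, v)) // (bigD1 (v, u)) /=; last first.
  by rewrite vuE; apply/eqP => -[].
rewrite Rplus_assoc; congr (_ + (_ + _)).
apply: eq_bigl => e; rewrite /delete_edge !inE.
by case: (e \in E); rewrite ?andbF ?andbT // andbC.
Qed.

Lemma exists_spanning_forest_subset G E :
  undirected E -> (forall u v, (u, v) \in E -> G u v) ->
  (forall u v, conn E u v <-> clos_refl_trans V G u v) ->
  exists2 F : {set V * V}, F \subset E & spanning_forest_of G F.
Proof.
have [n cE] : exists n, (#|E| <= n)%N by exists #|E|.
elim: n E cE => [|n IH] E cE uE sE cnE;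
  case: (pselect (is_forest E)) => [fE|nfE]; try by exists E.
- exfalso; apply: nfE; split => // u v.
  by move: cE; rewrite leqn0 => /eqP/cards0_eq ->; rewrite inE.
- have [u [v [uvE cuv]]] : exists u v, (u, v) \in E /\ conn (delete_edge E u v) u v.
    apply: contrapT => hn; apply: nfE; split => // u v uvE cuv.
    by apply: hn; exists u, v.
  have [F sF spF] : exists2 F : {set V * V},
      F \subset delete_edge E u v & spanning_forest_of G F.
    apply: IH; first by rewrite -ltnS (leq_trans (card_delete_edge uvE)).
    + exact: undirected_delete_edge.
    + by move=> a b /(subsetP (delete_edge_subset _ _ _))/sE.
    + by move=> a b; rewrite -conn_delete_edge.
  by exists F => //; apply: subset_trans sF (delete_edge_subset _ _ _).
Qed.

Lemma conn_exchange (E : {set V * V}) x y a b :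
  undirected E -> (x, y) \in E ->
  conn (delete_edge E x y) x a -> ~ conn (delete_edge E x y) x b -> conn E a b ->
  forall u v, conn E u v <-> conn (delete_edge E x y :|: [set (a, b); (b, a)]) u v.
Proof.
move=> uE xyE cxa ncxb cab.
have nab : a <> b by move=> eab; apply: ncxb; rewrite -eab.
set E' := _ :|: _.
have uE' : undirected E' by exact/undirected_add_edge/nab/undirected_delete_edge.
have sub_E' p q : conn (delete_edge E x y) p q -> conn E' p q.
  by move=> cpq; apply: clos_rt_mono cpq => p' q' h; apply: rt_step; rewrite /erel inE h.
have cab' : conn E' a b by apply: rt_step; rewrite /erel !inE eqxx orbT.
have cby : conn (delete_edge E x y) b y.
  have cxb : conn E x b.
    apply: rt_trans cab; apply: clos_rt_mono cxa => p q pq.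
    exact: rt_step (subsetP (delete_edge_subset E x y) _ pq).
  have [//|[_ [//|cyb]]] := clos_rt_add_edge (@erel_delete_edge E x y) cxb.
  exact/conn_sym/cyb/undirected_delete_edge.
have cxy : conn E' x y := rt_trans (sub_E' _ _ cxa) (rt_trans cab' (sub_E' _ _ cby)).
move=> u v; split => cuv.
  apply: clos_rt_mono cuv => p q /(erel_delete_edge x y) [pq|[[-> ->]|[-> ->]]] //.
    by apply: rt_step; rewrite /erel inE pq.
  exact: conn_sym cxy.
apply: clos_rt_mono cuv => p q; rewrite /erel in_setU => /orP[pq|].
  exact: rt_step (subsetP (delete_edge_subset E x y) _ pq).
by rewrite !inE => /orP[] /eqP[-> ->]; [|apply: conn_sym].
Qed.

End EdgeSets.

Section Metric.
Variables (V : finType) (d : V -> V -> R).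
Hypothesis md : is_metric d.

Lemma metric_refl u : d u u = 0.
Proof. by case: md => H _; apply/H. Qed.

Lemma metric_sym u v : d u v = d v u.
Proof. by case: md => _ []. Qed.

Lemma metric_triangle u v w : d u w <= d u v + d v w.
Proof. by case: md => _ []. Qed.

Lemma metric_ge0 u v : 0 <= d u v.
Proof. by have := metric_triangle u v u; rewrite metric_refl (metric_sym v u); lra. Qed.

Lemma weight_subset (A B : {set V * V}) : A \subset B -> weight d A <= weight d B.
Proof.
move=> sAB; rewrite /weight.
suff : \sum_(e in A) d e.1 e.2 <= \sum_(e in B) d e.1 e.2 by lra.
by apply: sumR_subset => // e _; apply: metric_ge0.
Qed.

Lemma SDG_sym r u v : SDG d r u v -> SDG d r v u.
Proof. by rewrite /SDG metric_sym => -[nuv []]; split => // /esym. Qed.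

End Metric.

Section MSFCut.
Variables (V : finType) (d : V -> V -> R) (G : V -> V -> Prop) (F : {set V * V}).
Hypotheses (md : is_metric d) (Gsym : forall u v, G u v -> G v u).
Hypothesis msfF : is_MSF d G F.

(* Otherwise some R0-edge crosses the cut of F minus {x, y}, and exchanging
   {x, y} for it yields a lighter spanning forest. *)
Lemma MSF_cut (R0 : V -> V -> Prop) x y :
  (x, y) \in F ->
  (forall a b, R0 a b -> a <> b ->
     (a, b) \in delete_edge F x y \/ (d a b < d x y /\ G a b)) ->
  ~ clos_refl_trans V R0 x y.
Proof.
case: msfF => -[[uF fF] [sF spF]] minF xyF R0F cxy.
have [a [b [R0ab cxa ncxb]]] :=
  clos_rt_exit_edge (P := conn (delete_edge F x y) x) cxy rt_refl (fF x y xyF).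
have nab : a <> b by move=> eab; apply: ncxb; rewrite -eab.
have abF : (a, b) \notin delete_edge F x y.
  by apply/negP => h; apply: ncxb; apply: rt_trans cxa (rt_step _).
have baF : (b, a) \notin delete_edge F x y.
  by apply/negP => /(undirected_delete_edge uF) [h _]; rewrite h in abF.
have [dab Gab] : d a b < d x y /\ G a b by case: (R0F a b R0ab nab) abF => [->|].
pose E := delete_edge F x y :|: [set (a, b); (b, a)].
have uE : undirected E by exact/undirected_add_edge/nab/undirected_delete_edge.
have sE p q : (p, q) \in E -> G p q.
  rewrite in_setU => /orP[/(subsetP (delete_edge_subset _ _ _))/sF //|].
  by rewrite !inE => /orP[] /eqP[-> ->] //; apply: Gsym.
have cnE u v : conn E u v <-> clos_refl_trans V G u v.
  by rewrite -(conn_exchange uF xyF cxa ncxb (proj2 (spF a b) (rt_step Gab))).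
have [F' sF' spF'] := exists_spanning_forest_subset uE sE cnE.
suff : weight d E < weight d F.
  by have := minF F' spF'; have := weight_subset md sF'; lra.
have [yxF nxy] := uF x y xyF.
have abE : (a, b) \in E by rewrite !inE eqxx orbT.
rewrite /weight (sum_delete_edge _ uF xyF) (sum_delete_edge _ uE abE).
rewrite delete_edge_setU2 //= (metric_sym md b a) (metric_sym md y x); lra.
Qed.

End MSFCut.

Lemma path_variation_le (V : finType) (f : V -> R) (E : {set V * V}) a b :
  undirected E -> conn E a b ->
  2 * Rabs (f b - f a) <= \sum_(e in E) Rabs (f e.2 - f e.1).
Proof.
have [n cE] : exists n, (#|E| < n)%N by exists #|E|.+1.
elim: n E a b cE => [|n IH] E a b // cE uE.
case/clos_rt_rt1n_iff => [|x z axE /clos_rt_rt1n_iff cxz].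
  by rewrite Rminus_diag Rabs_R0 Rmult_0_r; apply: sumR_ge0 => *; apply: Rabs_pos.
have cE' : (#|delete_edge E a x| < n)%N.
  exact: leq_trans (card_delete_edge axE) cE.
rewrite (sum_delete_edge _ uE axE) /= (Rabs_minus_sym (f a)).
set S := (X in _ <= _ + X).
have IH' c c' : conn (delete_edge E a x) c c' -> 2 * Rabs (f c' - f c) <= S.
  exact: IH cE' (undirected_delete_edge uE).
have := Rabs_triang (f z - f x) (f x - f a).
rewrite (_ : f z - f x + (f x - f a) = f z - f a); last by ring.
have := Rabs_pos (f x - f a).
case: (clos_rt_add_edge (@erel_delete_edge _ E a x) cxz) => [cxb|[_ [cab|cxb]]];
  [have := IH' _ _ cxb|have := IH' _ _ cab|have := IH' _ _ cxb]; lra.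
Qed.

Section Packing.
Variables (V : finType) (d : V -> V -> R).
Hypothesis md : is_metric d.

Definition separated (Q : {set V}) l :=
  forall p q, p \in Q -> q \in Q -> p <> q -> l <= d p q.

Lemma separated_ball_uniq Q l z p q :
  separated Q l -> p \in Q -> q \in Q -> d z p < l / 2 -> d z q < l / 2 -> p = q.
Proof.
move=> sepQ pQ qQ zp zq; apply: contrapT => npq.
have := sepQ p q pQ qQ npq; have := metric_triangle md p z q.
rewrite (metric_sym md p z); lra.
Qed.

Lemma truncated_dist_lipschitz h x y p :
  Rabs (Rmin (d y p) h - Rmin (d x p) h) <= d x y.
Proof.
have := metric_triangle md y x p; have := metric_triangle md x y p.
rewrite (metric_sym md y x) /Rmin.
by case: Rle_dec; case: Rle_dec => h1 h2; rewrite /Rabs; repeat case: Rcase_abs; lra.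
Qed.

Lemma truncated_dist_far h x y p :
  h <= d x p -> h <= d y p -> Rabs (Rmin (d y p) h - Rmin (d x p) h) = 0.
Proof.
rewrite /Rmin => *; case: Rle_dec; case: Rle_dec => *.
all: by rewrite /Rabs; case: Rcase_abs; lra.
Qed.

Lemma truncated_dist_pair_le l x y p0 p1 :
  d x p0 < l / 2 -> l / 2 <= d y p0 -> d y p1 < l / 2 -> l / 2 <= d x p1 ->
  l <= d p0 p1 ->
  Rabs (Rmin (d y p0) (l / 2) - Rmin (d x p0) (l / 2)) +
  Rabs (Rmin (d y p1) (l / 2) - Rmin (d x p1) (l / 2)) <= d x y.
Proof.
move=> xp0 yp0 yp1 xp1 l01.
rewrite (Rmin_right (d y p0)) // (Rmin_right (d x p1)) //.
rewrite (Rmin_left (d x p0)) ?(Rmin_left (d y p1)); try lra.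
rewrite Rabs_pos_eq ?Rabs_left1; try lra.
have := metric_triangle md p0 x p1; have := metric_triangle md x y p1.
by rewrite (metric_sym md p0 x); lra.
Qed.

(* The truncated distance functions to the points of an l-separated set have
   disjoint supports of radius l/2, so together they are still 1-Lipschitz. *)
Lemma sum_truncated_dist_le Q l x y :
  separated Q l ->
  \sum_(p in Q) Rabs (Rmin (d y p) (l / 2) - Rmin (d x p) (l / 2)) <= d x y.
Proof.
move=> sepQ; pose t p := Rabs (Rmin (d y p) (l / 2) - Rmin (d x p) (l / 2)).
change (\sum_(p in Q) t p <= d x y).
have uniq := separated_ball_uniq sepQ.
have only z p0 : p0 \in Q -> d z p0 < l / 2 ->
    forall p, p \in Q -> p != p0 -> l / 2 <= d z p.
  by move=> p0Q zp0 p pQ /eqP np0; apply: Rnot_gt_le => zp; apply/np0/(uniq z).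
have single p0 : p0 \in Q -> (forall p, p \in Q -> p != p0 -> t p = 0) ->
    \sum_(p in Q) t p <= d x y.
  move=> p0Q t0; rewrite (bigD1 p0) //= big1.
    by rewrite Rplus_0_r; apply: truncated_dist_lipschitz.
  by move=> p /andP[]; apply: t0.
case: (pselect (exists2 p0, p0 \in Q & d x p0 < l / 2)) => [[p0 p0Q xp0]|nx];
case: (pselect (exists2 p1, p1 \in Q & d y p1 < l / 2)) => [[p1 p1Q yp1]|ny].
- case: (eqVneq p0 p1) => [e01|n01].
    rewrite -e01 in yp1; apply: (single p0) => // p pQ np0.
    by apply: truncated_dist_far; [apply: (only x p0)|apply: (only y p0)].
  rewrite (bigD1 p0) //= (bigD1 p1) /=; last by rewrite p1Q eq_sym.
  rewrite big1; last first.
    move=> p /andP[/andP[pQ np0] np1].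
    by apply: truncated_dist_far; [apply: (only x p0)|apply: (only y p1)].
  rewrite Rplus_0_r; apply: truncated_dist_pair_le => //.
  + exact: (only y p1).
  + by apply: (only x p0) => //; rewrite eq_sym.
  + by apply: sepQ => //; apply/eqP.
- apply: (single p0) => // p pQ np0; apply: truncated_dist_far; first exact: (only x p0).
  by apply: Rnot_gt_le => yp; apply: ny; exists p.
- apply: (single p1) => // p pQ np1; apply: truncated_dist_far; last exact: (only y p1).
  by apply: Rnot_gt_le => xp; apply: nx; exists p.
- rewrite big1; first exact: metric_ge0.
  move=> p pQ; apply: truncated_dist_far; apply: Rnot_gt_le => zp;
    [apply: nx|apply: ny]; by exists p.
Qed.

(* Each point of Q sees a rise of l/2 of its truncated distance along a path
   of T, which costs l on the (doubly counted) edges of T. *)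
Lemma packing_bound (T : {set V * V}) Q l :
  0 < l -> undirected T -> (forall u v, conn T u v) -> separated Q l ->
  (forall p, p \in Q -> exists z, l <= d p z) ->
  INR #|Q| * l <= \sum_(e in T) d e.1 e.2.
Proof.
move=> lpos uT cT sepQ far.
pose c p (e : V * V) := Rabs (Rmin (d e.2 p) (l / 2) - Rmin (d e.1 p) (l / 2)).
have cover p : p \in Q -> l <= \sum_(e in T) c p e.
  move=> pQ; have [z pz] := far p pQ.
  have := path_variation_le (fun w => Rmin (d w p) (l / 2)) uT (cT p z).
  rewrite metric_refl // (metric_sym md z p) Rmin_right; last lra.
  rewrite Rmin_left; last lra.
  by rewrite Rabs_pos_eq /c; lra.
rewrite -sumR_const; apply: Rle_trans (sumR_le cover) _.
rewrite exchange_big; apply: sumR_le => e _.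
exact: sum_truncated_dist_le.
Qed.

End Packing.

Fixpoint harmonic (n : nat) : R :=
  if n is k.+1 then harmonic k + / INR k.+1 else 0.

Lemma harmonicS n : harmonic n.+1 = harmonic n + / INR n.+1.
Proof. by []. Qed.

Lemma exists_minimizer (X : finType) (A : {set X}) (f : X -> R) :
  A != set0 -> exists2 x0, x0 \in A & forall y, y \in A -> f x0 <= f y.
Proof.
have [n cA] : exists n, #|A| = n by exists #|A|.
elim: n A cA => [|n IH] A cA; first by rewrite -cards_eq0 cA.
move=> _; have [a aA] : exists a, a \in A by apply/set0Pn; rewrite -card_gt0 cA.
have [A1|nA1] := eqVneq (A :\ a) set0.
  exists a => // y yA; suff -> : y = a by apply: Rle_refl.
  by apply: contraTeq yA => ya; rewrite -(setD1K aA) A1 setU0 inE.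
have cA' : #|A :\ a| = n by rewrite (cardsD1 a A) aA in cA; case: cA.
have [m] := IH (A :\ a) cA' nA1.
rewrite !inE => /andP[_ mA] hm.
case: (Rle_dec (f a) (f m)) => h; [exists a|exists m] => // y yA;
  case: (eqVneq y a) => [->|nya]; try lra; last by apply: hm; rewrite !inE nya.
by apply: Rle_trans h (hm y _); rewrite !inE nya.
Qed.

(* If the k-th largest value is at most C / k, the total is at most C H_n. *)
Lemma sum_le_harmonic (X : finType) (A : {set X}) (f : X -> R) C :
  (forall x, x \in A -> 0 <= f x) ->
  (forall x, x \in A -> INR #|[set y in A | `[< f x <= f y >]]| * f x <= C) ->
  \sum_(x in A) f x <= C * harmonic #|A|.
Proof.
have [n cA] : exists n, #|A| = n by exists #|A|.
rewrite cA; elim: n A cA => [|n IH] A cA f0 hC.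
  by rewrite (cards0_eq cA) big_set0 Rmult_0_r; apply: Rle_refl.
have [x0 x0A hx0] : exists2 x0, x0 \in A & forall y, y \in A -> f x0 <= f y.
  by apply: exists_minimizer; rewrite -card_gt0 cA.
have cA' : #|A :\ x0| = n by rewrite (cardsD1 x0 A) x0A in cA; case: cA.
have fx0 : f x0 <= C * / INR n.+1.
  have pn : 0 < INR n.+1 by apply: lt_0_INR; apply/ltP.
  have := hC x0 x0A.
  have -> : [set y in A | `[< f x0 <= f y >]] = A.
    by apply/setP => y; rewrite inE; case: (boolP (y \in A)) => // /hx0 /asboolP.
  rewrite cA => h; apply: (Rmult_le_reg_l (INR n.+1)) => //.
  by rewrite -Rmult_assoc (Rmult_comm _ C) Rmult_assoc Rinv_r; lra.
have IH' : \sum_(x in A :\ x0) f x <= C * harmonic n.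
  apply: IH => // x; rewrite !inE => /andP[_ xA]; first exact: f0.
  apply: Rle_trans (hC x xA); apply: Rmult_le_compat_r; first exact: f0.
  apply/le_INR/leP/subset_leq_card/subsetP => y.
  by rewrite !inE => /andP[/andP[_ ->] ->].
rewrite harmonicS; set k := INR n.+1 in fx0 *.
rewrite Rmult_plus_distr_l (bigD1 x0) //= (eq_bigl (fun x => x \in A :\ x0)).
  by lra.
by move=> x; rewrite !inE andbC.
Qed.

Lemma ln_le_sub1 z : 0 < z -> ln z <= z - 1.
Proof. by move=> zpos; have := exp_ineq1_le (ln z); rewrite exp_ln //; lra. Qed.

Lemma harmonic_le_1_ln n : (0 < n)%N -> harmonic n <= 1 + ln (INR n).
Proof.
elim: n => [//|[|n] IH] _; first by rewrite /= ln_1; lra.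
have p1 : 0 < INR n.+1 by apply: lt_0_INR; apply/ltP.
have p2 : 0 < INR n.+2 by apply: lt_0_INR; apply/ltP.
have := ln_le_sub1 (Rdiv_lt_0_compat _ _ p1 p2).
rewrite harmonicS /Rdiv ln_mult ?ln_Rinv //; last exact: Rinv_0_lt_compat.
have -> : INR n.+1 * / INR n.+2 - 1 = - / INR n.+2 by rewrite [INR n.+2]S_INR; field; lra.
by have := IH isT; lra.
Qed.

Lemma harmonic_mono m n : (m <= n)%N -> harmonic m <= harmonic n.
Proof.
move=> /subnK <-; elim: (n - m)%N => [|k IH]; first exact: Rle_refl.
rewrite addSn harmonicS.
suff : 0 < / INR (k + m).+1 by lra.
by apply/Rinv_0_lt_compat/lt_0_INR/ltP.
Qed.

(* Since ln(5/4) <= 1/4 and ln n >= ln 2 > 1/2, we have 1 + 2 ln n <= 4 ln n. *)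
Lemma harmonic_le_log54 n N :
  (2 <= n)%N -> (N <= n * n)%N -> harmonic N <= ln (INR n) / ln (5 / 4).
Proof.
move=> n2 hN.
have pn : 0 < INR n by apply/lt_0_INR/ltP/(leq_trans _ n2).
have hH : harmonic N <= 1 + 2 * ln (INR n).
  apply: Rle_trans (harmonic_mono hN) _.
  apply: Rle_trans (harmonic_le_1_ln _) _; first by rewrite muln_gt0 (leq_trans _ n2).
  by rewrite mult_INR ln_mult //; lra.
have l2 : / 2 < ln (INR n).
  apply: Rlt_le_trans ln_lt_2 _.
  have : 2 <= INR n by rewrite (_ : 2 = INR 2) //; apply/le_INR/leP.
  case/Rle_lt_or_eq_dec => [h|<-]; last exact: Rle_refl.
  by apply/Rlt_le/ln_increasing => //; lra.
have l54 : ln (5 / 4) <= 1 / 4 by have := ln_le_sub1 (_ : 0 < 5 / 4); lra.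
have l54p : 0 < ln (5 / 4) by rewrite -ln_1; apply: ln_increasing; lra.
apply: Rle_trans hH _; apply: (Rmult_le_reg_r (ln (5 / 4))) => //.
rewrite /Rdiv Rmult_assoc Rinv_l; last lra.
have : (1 + 2 * ln (INR n)) * ln (5 / 4) <= (1 + 2 * ln (INR n)) * (1 / 4).
  by apply: Rmult_le_compat_l; lra.
lra.
Qed.

Section BridgeOrientation.
Variables (V : finType) (S : {set V * V}) (hop : V -> V -> Prop).
Hypotheses (uS : undirected S) (hop_sym : forall x y, hop x y -> hop y x).

Definition joint_graph : V -> V -> Prop := fun x y => (x, y) \in S \/ hop x y.

Definition cut_graph (c a : V) : V -> V -> Prop :=
  fun x y => (x, y) \in delete_edge S c a \/ hop x y.

Hypothesis S_bridges :
  forall x y, (x, y) \in S -> ~ clos_refl_trans V (cut_graph x y) x y.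

Lemma cut_graphC c a : cut_graph c a = cut_graph a c.
Proof. by rewrite /cut_graph delete_edgeC. Qed.

Lemma cut_graph_sym c a x y : cut_graph c a x y -> cut_graph c a y x.
Proof. by case=> [/(undirected_delete_edge uS)[]|/hop_sym]; [left|right]. Qed.

Lemma joint_graph_sym x y : joint_graph x y -> joint_graph y x.
Proof. by case=> [/uS[]|/hop_sym]; [left|right]. Qed.

Lemma joint_graph_cut c a x y :
  joint_graph x y -> cut_graph c a x y \/ (x = c /\ y = a) \/ (x = a /\ y = c).
Proof.
case=> [xyS|]; last by left; right.
have [/eqP[-> ->]|nca] := boolP ((x, y) == (c, a)); first by right; left.
have [/eqP[-> ->]|nac] := boolP ((x, y) == (a, c)); first by right; right.
by left; left; rewrite in_delete_edge nac nca.
Qed.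

(* Orient an edge {c, a} of S away from rho when cutting it separates c from
   rho.  Two such oriented edges whose tails are hop-connected coincide: else
   cutting both, rho reaches a, and then c, without using {c', a'}. *)
Lemma oriented_edges_eq c a c' a' rho :
  (c, a) \in S ->
  ~ clos_refl_trans V (cut_graph c a) rho c -> clos_refl_trans V (cut_graph c a) rho a ->
  ~ clos_refl_trans V (cut_graph c' a') rho c' ->
  clos_refl_trans V (cut_graph c' a') rho a' ->
  clos_refl_trans V hop c c' -> (c', a') = (c, a) \/ (c', a') = (a, c).
Proof.
move=> caS _ rho_a nrho_c' rho_a' hcc'.
apply: contrapT => /not_orP[n1 n2].
pose G2 x y := (x, y) \in delete_edge (delete_edge S c a) c' a' \/ hop x y.
have G2_cut x y : G2 x y -> cut_graph c a x y.
  by case=> [/(subsetP (delete_edge_subset _ _ _))|]; [left|right].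
have G2_cut' x y : G2 x y -> cut_graph c' a' x y.
  case=> [|]; last by right.
  rewrite !in_delete_edge => /and3P[h1 h2 /and3P[_ _ h3]].
  by left; rewrite in_delete_edge h1 h2 h3.
have split_cut x y : cut_graph c a x y ->
    G2 x y \/ (x = c' /\ y = a') \/ (x = a' /\ y = c').
  case=> [xyS|]; last by left; right.
  have [/eqP[-> ->]|h1] := boolP ((x, y) == (c', a')); first by right; left.
  have [/eqP[-> ->]|h2] := boolP ((x, y) == (a', c')); first by right; right.
  by left; left; rewrite in_delete_edge h1 h2.
have ac_cut' : cut_graph c' a' a c.
  left; rewrite in_delete_edge (proj1 (uS caS)) andbT.
  by apply/andP; split; apply/eqP => -[e1 e2]; [apply: n1|apply: n2]; rewrite e1 e2.
have hop_cut' : clos_refl_trans V (cut_graph c' a') c c'.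
  by apply: clos_rt_mono hcc' => x y h; apply: rt_step; right.
have nrho_c : ~ clos_refl_trans V (cut_graph c' a') rho c.
  by move=> h; apply: nrho_c'; apply: rt_trans h hop_cut'.
have G2_to_cut' p q : clos_refl_trans V G2 p q -> clos_refl_trans V (cut_graph c' a') p q.
  by apply: clos_rt_mono => x y /G2_cut' /rt_step.
have [h|[_ [h|h]]] := clos_rt_add_edge split_cut rho_a.
- by apply: nrho_c; apply: rt_trans (G2_to_cut' _ _ h) (rt_step ac_cut').
- apply: (S_bridges caS); apply: rt_trans (clos_rt_mono _ hcc') _.
    by move=> x y hxy; apply: rt_step; right.
  by apply: clos_rt_mono h => x y /G2_cut /rt_step.
- apply: nrho_c; apply: rt_trans rho_a' (rt_trans (G2_to_cut' _ _ h) _).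
  exact: rt_step ac_cut'.
Qed.

Definition root (z : V) : V :=
  odflt z [pick w | `[< clos_refl_trans V joint_graph z w >]].

Lemma root_conn z : clos_refl_trans V joint_graph z (root z).
Proof. by rewrite /root; case: pickP => [w /asboolP //|_]; apply: rt_refl. Qed.

Lemma root_eq z w : clos_refl_trans V joint_graph z w -> root z = root w.
Proof.
move=> czw; rewrite /root.
rewrite (@eq_pick _ _ (fun v => `[< clos_refl_trans V joint_graph w v >])).
  by case: pickP => [//|/(_ w)]; rewrite (asboolT rt_refl).
move=> v; apply/asboolP/asboolP => h.
  exact: rt_trans (clos_rt_sym joint_graph_sym czw) h.
exact: rt_trans czw h.
Qed.

(* The end of an edge of S that is cut off from the root of its component. *)
Definition child (x y : V) : V :=
  if `[< clos_refl_trans V (cut_graph x y) (root x) x >] then y else x.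

Lemma root_reaches_edge x y :
  clos_refl_trans V (cut_graph x y) (root x) x \/
  clos_refl_trans V (cut_graph x y) (root x) y.
Proof.
have [h|[[h|h] _]] :=
  clos_rt_add_edge (@joint_graph_cut x y) (clos_rt_sym joint_graph_sym (root_conn x));
  by [left|left|right].
Qed.

Lemma child_spec x y : (x, y) \in S -> exists a,
  [/\ (child x y, a) = (x, y) \/ (child x y, a) = (y, x),
      ~ clos_refl_trans V (cut_graph (child x y) a) (root x) (child x y) &
      clos_refl_trans V (cut_graph (child x y) a) (root x) a].
Proof.
move=> xyS; rewrite /child; case: asboolP => [rx|nrx].
  exists x; split; [by right| |by rewrite cut_graphC].
  rewrite cut_graphC => ry; apply: (S_bridges xyS); apply: rt_trans _ ry.
  exact: clos_rt_sym (@cut_graph_sym x y) _ _ rx.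
exists y; split=> //; first by left.
by case: (root_reaches_edge x y).
Qed.

Lemma child_in x y : child x y = x \/ child x y = y.
Proof. by rewrite /child; case: ifP; [right|left]. Qed.

Lemma child_sym x y : (x, y) \in S -> child y x = child x y.
Proof.
move=> xyS; have rxy : root y = root x.
  by apply/esym/root_eq/rt_step; left.
rewrite /child rxy (cut_graphC y x).
case: asboolP => [ry|nry]; case: asboolP => [rx|nrx] //.
- case: (S_bridges xyS); apply: rt_trans _ ry.
  exact: clos_rt_sym (@cut_graph_sym x y) _ _ rx.
- by case: (root_reaches_edge x y).
Qed.

Lemma child_hop_eq x y x' y' :
  (x, y) \in S -> (x', y') \in S ->
  clos_refl_trans V hop (child x y) (child x' y') ->
  (x', y') = (x, y) \/ (x', y') = (y, x).
Proof.
move=> xyS xyS' hc.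
have [a [eca nc ca]] := child_spec xyS.
have [a' [eca' nc' ca']] := child_spec xyS'.
have rr : root x' = root x.
  apply/esym/root_eq; apply: rt_trans (_ : clos_refl_trans V _ x (child x y)) _.
    by case: (child_in x y) => ->; [apply: rt_refl|apply: rt_step; left].
  apply: rt_trans (clos_rt_mono _ hc) _; first by move=> p q h; apply: rt_step; right.
  case: (child_in x' y') => ->; first exact: rt_refl.
  by apply: rt_step; left; case: (uS xyS').
rewrite rr in nc' ca'.
have caS : (child x y, a) \in S by case: eca => -[-> ->] //; case: (uS xyS).
have := oriented_edges_eq caS nc ca nc' ca' hc.
by case: eca => -[-> ->]; case: eca' => -[-> ->] [] [-> ->]; tauto.
Qed.

Lemma children_hop_eq p q :
  p \in [set child e.1 e.2 | e in S] -> q \in [set child e.1 e.2 | e in S] ->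
  hop p q -> p = q.
Proof.
move=> /imsetP[[x y] xyS ->] /imsetP[[x' y'] xyS' ->] /= hpq.
by case: (child_hop_eq xyS xyS' (rt_step hpq)) => -[-> ->] //; rewrite (child_sym xyS).
Qed.

(* An edge is determined by its child and by which of its ends the child is. *)
Lemma card_le_children : (#|S| <= #|[set child e.1 e.2 | e in S]| * 2)%N.
Proof.
pose code e := (child e.1 e.2, child e.1 e.2 == e.1).
have code_inj : {in S &, injective code}.
  move=> [x y] [x' y'] xyS xyS' /= [e1 e2].
  have [//|[ex ey]] := child_hop_eq xyS xyS' (eq_ind _ _ rt_refl _ e1).
  subst x' y'; have [_ /eqP nxy] := uS xyS.
  move: e2; rewrite (child_sym xyS).
  by case: (child_in x y) => ->; rewrite eqxx ?(negbTE nxy) // eq_sym (negbTE nxy).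
rewrite -(card_in_imset code_inj) -card_bool -cardsT -cardsX.
apply/subset_leq_card/subsetP => _ /imsetP[e eS ->].
by rewrite in_setX in_setT andbT; apply/imsetP; exists e.
Qed.

End BridgeOrientation.

Section LongEdges.
Variables (V : finType) (d : V -> V -> R) (r : V -> R) (F : {set V * V}) (l : R).
Hypotheses (md : is_metric d) (msfF : is_MSF d (SDG d r) F) (lpos : 0 < l).

Definition long_edges : {set V * V} := [set e in F | `[< l <= d e.1 e.2 >]].

Definition long_end (z : V) : Prop := exists w, (z, w) \in long_edges.

Definition short_hop (x y : V) : Prop := [/\ long_end x, long_end y & d x y < l].

Lemma long_edgesP x y : (x, y) \in long_edges -> (x, y) \in F /\ l <= d x y.
Proof. by rewrite inE => /andP[xyF /asboolP]. Qed.

Lemma undirected_long_edges : undirected long_edges.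
Proof.
have [[[uF _] _] _] := msfF.
move=> x y /long_edgesP[/uF[yxF nxy] lxy]; split=> //.
by rewrite inE yxF; apply/asboolP; rewrite metric_sym.
Qed.

Lemma short_hop_sym x y : short_hop x y -> short_hop y x.
Proof. by case=> ? ? ?; split=> //; rewrite metric_sym. Qed.

(* Short hops are disk-graph edges shorter than every long edge, because the
   radius at an end of a long edge is at least l. *)
Lemma long_edges_bridges x y :
  (x, y) \in long_edges ->
  ~ clos_refl_trans V (cut_graph long_edges short_hop x y) x y.
Proof.
have [[_ [sF _]] _] := msfF.
have radius z : long_end z -> l <= r z.
  by move=> [w /long_edgesP[/sF[_ [rz _]] lzw]]; lra.
move=> /long_edgesP[xyF lxy]; apply: (MSF_cut md (@SDG_sym _ _ md r) msfF xyF).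
move=> a b [abS|[ea eb dab]] nab.
  move: abS; rewrite !in_delete_edge => /and3P[h1 h2 /long_edgesP[abF _]].
  by left; rewrite h1 h2 abF.
by right; split; [lra|split=> //; have := radius _ ea; have := radius _ eb; lra].
Qed.

Lemma long_edges_bound (T : {set V * V}) :
  is_MST d T -> INR #|long_edges| * l <= 2 * \sum_(e in T) d e.1 e.2.
Proof.
move=> [[[uT _] [_ spT]] _].
have uS := undirected_long_edges.
have bS := long_edges_bridges.
set Q := [set child long_edges short_hop e.1 e.2 | e in long_edges].
have child_end p : p \in Q -> long_end p /\ exists z, l <= d p z.
  move=> /imsetP[[x y] xyS ->] /=; have [_ lxy] := long_edgesP xyS.
  case: (child_in long_edges short_hop x y) => ->; first by split; exists y.
  by split; exists x; [case: (uS _ _ xyS)|rewrite metric_sym].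
have sepQ : separated d Q l.
  move=> p q pQ qQ npq; apply: Rnot_gt_le => dpq; apply: npq.
  apply: (children_hop_eq uS short_hop_sym bS) => //.
  by split=> //; [case: (child_end p pQ)|case: (child_end q qQ)].
have cT u v : conn T u v.
  apply/spT; case: (eqVneq u v) => [->|nuv]; first exact: rt_refl.
  exact/rt_step/eqP.
have := packing_bound md lpos uT cT sepQ (fun p pQ => proj2 (child_end p pQ)).
have := card_le_children uS short_hop_sym bS.
move=> /leP/le_INR; rewrite mult_INR -/Q /= => cardS packQ.
apply: Rle_trans (Rmult_le_compat_r _ _ _ (Rlt_le _ _ lpos) cardS) _.
by rewrite (_ : _ * (1 + 1) * l = 2 * (INR #|Q| * l)); [lra|ring].
Qed.

End LongEdges.

(* Stdlib's [ln] is 0 on nonpositive arguments. *)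
Lemma ln_INR_le1 n : (n <= 1)%N -> ln (INR n) = 0.
Proof.
case: n => [|[|//]] _ /=; last exact: ln_1.
by unfold ln; case: Rlt_dec => [h|//]; exfalso; lra.
Qed.

Theorem theorem1 (V : finType) (d : V -> V -> R) (r : V -> R)
    (F T : {set V * V}) :
  is_metric d ->
  (forall v, 0 < r v) ->
  is_MSF d (SDG d r) F ->
  is_MST d T ->
  weight d F <= 2 * (ln (INR #|V|) / ln (5 / 4)) * weight d T.
Proof.
move=> md _ msfF mstT; have [[[uF _] _] _] := msfF.
have sumT0 : 0 <= \sum_(e in T) d e.1 e.2 by apply: sumR_ge0 => e _; apply: metric_ge0.
case: (leqP #|V| 1) => [V1|V2].
  have -> : F = set0.
    apply/setP => -[u v]; rewrite inE; apply/negP => /uF[_]; apply.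
    by move/fintype_le1P: V1 => /(_ u v) ->.
  by rewrite ln_INR_le1 // /weight big_set0; lra.
have dpos e : e \in F -> 0 < d e.1 e.2.
  move: e => [u v] /uF[_ nuv] /=; have := metric_ge0 md u v.
  by case/Rle_lt_or_eq_dec => // /esym /(proj1 md u v) /nuv.
have HF : \sum_(e in F) d e.1 e.2 <= 2 * (\sum_(e in T) d e.1 e.2) * harmonic #|F|.
  apply: sum_le_harmonic => [e _|e eF]; first exact: metric_ge0.
  exact: (long_edges_bound md msfF (dpos e eF) mstT).
have cardF : (#|F| <= #|V| * #|V|)%N by rewrite -card_prod max_card.
have := harmonic_le_log54 V2 cardF.
set L := ln (INR #|V|) / ln (5 / 4) => HL.
have := Rmult_le_compat_l _ _ _ sumT0 HL.
by rewrite /weight; lra.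
Qed.
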